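(* Let $u\in\mathbb Z$, $\ell,d_1,\dots,d_\ell\in\mathbb N$ and $\phi(\tau,z)=\eta(\tau)^u\prod_{i=1}^\ell\vartheta(\tau,d_iz)$. Then, regarding $\phi$ and $\frac{\phi(2\tau,2z)}{\phi(\tau,z)}$ as formal series in $R(24)$, $$\nu_J\Bigl(\frac{\phi(2\tau,2z)}{\phi(\tau,z)}\Bigr)=\nu_J(\phi).$$
   Context: $q=e^{2\pi i\tau}$, $\zeta=e^{2\pi iz}$; $\eta(\tau)=q^{1/24}\prod_{n\ge1}(1-q^n)$ and $\vartheta(\tau,z)=q^{1/8}(\zeta^{1/2}-\zeta^{-1/2})\prod_{j\ge1}(1-q^j\zeta)(1-q^j\zeta^{-1})(1-q^j)$. With $v=\frac{u+3\ell}{24}$ and $k=\frac{\ell+u}2$ one has the product expansions $\phi=q^v\prod_{j}(1-q^j)^{2k}\prod_i(\zeta^{d_i/2}-\zeta^{-d_i/2})\prod_{i,j}(1-q^j\zeta^{d_i})(1-q^j\zeta^{-d_i})$ and $\frac{\phi(2\tau,2z)}{\phi(\tau,z)}=q^v\prod_{j}(1+q^j)^{2k}\prod_i(\zeta^{d_i/2}+\zeta^{-d_i/2})\prod_{i,j}(1+q^j\zeta^{d_i})(1+q^j\zeta^{-d_i})$, which are formal series in $R(24)$. Here $R(N)=\mathbb C[\zeta^{1/N},\zeta^{-1/N}]((q^{1/N}))$ is the ring of formal series $f=\sum_{n,r\in\frac1N\mathbb Z}c(n,r)q^n\zeta^r$ with finitely many $r$ for each $n$ and $n$ bounded below on $\operatorname{supp}(f)=\{(n,r):c(n,r)\neq0\}$.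 For $P\subseteq\mathbb R^2$, $\operatorname{conv}(P;\vec A)=\operatorname{conv}(P)+[0,\infty)\times\{0\}$ and $\nu_J(f)=\operatorname{Closure}_{\mathbb R^2}(\operatorname{conv}(\operatorname{supp}(f);\vec A))$. *)

From HB Require Import structures.
From mathcomp Require Import all_boot all_order all_algebra.
From mathcomp Require Import all_classical all_reals all_analysis.
Set Implicit Arguments. Unset Strict Implicit. Unset Printing Implicit Defensive.
Import Order.TTheory GRing.Theory Num.Theory.
Import numFieldNormedType.Exports.
Local Open Scope classical_set_scope.
Local Open Scope ring_scope.

(* Formal series are encoded via truncations in {poly {poly int}}:
   the outer variable qX is q, the inner variable YX is Y = zeta^(1/2).
   Negative powers of Y are removed by multiplying each factor by a power
   of Y (tracked by an explicit shift); negative powers of (1 +- q^j) are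
   replaced by geometric sums truncated at order N, which is exact modulo
   q^(N+1). *)
Definition qX : {poly {poly int}} := 'X.
Definition YX : {poly {poly int}} := ('X : {poly int})%:P.

(* sg = -1 : the product expansion of phi / q^v;
   sg =  1 : the product expansion of phi(2tau,2z)/phi(tau,z) / q^v.
   e = 2k = l + u. *)
Definition etaf (sg e : int) (j N : nat) : {poly {poly int}} :=
  match e with
  | Posz m => (1 + sg%:~R * qX ^+ j) ^+ m
  | Negz m => (\sum_(0 <= t < N.+1) (- (sg%:~R * qX ^+ j)) ^+ t) ^+ m.+1
  end.

(* Y^(sum d) * (1 +- ...) truncated product up to j = N, times
   Y^(2 * N * sum d). *)
Definition prodser (sg e : int) (d : seq nat) (N : nat) : {poly {poly int}} :=
  (\prod_(x <- d) (YX ^+ (2 * x) + sg%:~R)) *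
  \prod_(1 <= j < N.+1)
     (etaf sg e j N *
      \prod_(x <- d) ((YX ^+ (2 * x) + sg%:~R * qX ^+ j) *
                      (1 + sg%:~R * qX ^+ j * YX ^+ (2 * x)))).

(* coefficient of q^(v + n) zeta^(s/2) (v = (u+3l)/24 the common prefactor) *)
Definition coefser (sg u : int) (d : seq nat) (n : nat) (s : int) : int :=
  let e := (size d)%:Z + u in
  let sh := (sumn d + n * (2 * sumn d))%N in
  match s + sh%:Z with
  | Posz m => ((prodser sg e d n)`_n)`_m
  | Negz _ => 0
  end.

Definition coef_phi (u : int) (d : seq nat) := coefser (-1) u d.
Definition coef_quot (u : int) (d : seq nat) := coefser 1 u d.

(* support in R^2 (coordinates: (q-exponent, zeta-exponent)) *)
Definition supp (R : realType) (v : R) (c : nat -> int -> int) : set (R * R) :=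
  [set p | exists (n : nat) (s : int), c n s != 0 /\ p = (v + n%:R, s%:~R / 2)].

Definition conv (R : realType) (P : set (R * R)) : set (R * R) :=
  [set x | exists (m : nat) (w : 'I_m -> R) (p : 'I_m -> R * R),
      (forall i, 0 <= w i) /\ \sum_(i < m) w i = 1 /\ (forall i, P (p i)) /\
      x = (\sum_(i < m) w i * (p i).1, \sum_(i < m) w i * (p i).2)].

Definition convA (R : realType) (P : set (R * R)) : set (R * R) :=
  [set x | exists y t, conv P y /\ 0 <= t /\ x = (y.1 + t, y.2)].

Definition nuJ (R : realType) (P : set (R * R)) : set (R * R) :=
  closure (convA P).

Definition vexp (R : realType) (u : int) (d : seq nat) : R :=
  (u + 3 * (size d)%:Z)%:~R / 24.

From Pilot Require Import Defs.
From HB Require Import structures.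
From mathcomp Require Import all_boot all_order all_algebra.
From mathcomp Require Import all_classical all_reals all_analysis.
From mathcomp Require Import ring lra zify.
Import Order.TTheory GRing.Theory Num.Theory.
Import numFieldNormedType.Exports.
Set Implicit Arguments. Unset Strict Implicit. Unset Printing Implicit Defensive.
Local Open Scope classical_set_scope.
Local Open Scope ring_scope.

(* Up to the common factor q^v, both series are products of the binomials
   [Y^(2x) + sg q^j] and [1 + sg q^j Y^(2x)] (Y = zeta^(1/2)) and of powers of
   [1 + sg q^j] or of their truncated inverses, with sg = -1 for phi and sg = 1
   for the quotient.  For a linear functional on exponents, refined
   lexicographically to break ties, every factor has a unique top monomial with
   coefficient +-1, so the product has a unique top monomial, with a nonzero
   coefficient, at a place that does not depend on sg.  Taking the functionals
   b * (zeta-exponent) - a * (q-exponent), both supports lie below the same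
   lines and both contain the endpoints of the edge of slope a/b; choosing the
   slope whose edge lies over a given q-exponent puts every point of one support
   in the convex hull of the other.  When no theta factor is present the support
   is a ray along q, which is where the direction [0, oo) x {0} is needed. *)

Notation bipoly := {poly {poly int}}.

Definition coef2 (P : bipoly) (n m : nat) : int := P`_n`_m.

Definition mono2 (k : int) (i l : nat) : bipoly := k%:~R * qX ^+ i * YX ^+ l.

Lemma coef2_mono2 k i l n m :
  coef2 (mono2 k i l) n m = if (n == i) && (m == l) then k else 0.
Proof.
rewrite /coef2 /mono2 /qX /YX.
have -> : (k%:~R * 'X ^+ i * ('X%:P) ^+ l : bipoly) = (k%:~R * 'X^l)%:P * 'X^i.
  by rewrite rmorphM /= rmorphXn /= rmorph_int; ring.
rewrite coefCM coefXn; case: (n == i) => /=; last by rewrite mulr0 coef0.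
rewrite mulr1 -[in LHS](intz k) -polyC1 -polyCMz coefCM coefXn.
by case: (m == l); rewrite ?mulr1 ?mulr0 ?intz.
Qed.

Lemma coef2D P Q n m : coef2 (P + Q) n m = coef2 P n m + coef2 Q n m.
Proof. by rewrite /coef2 !coefD. Qed.

Lemma coef2M P Q n m : coef2 (P * Q) n m =
  \sum_(i < n.+1) \sum_(k < m.+1) coef2 P i k * coef2 Q (n - i) (m - k).
Proof. by rewrite /coef2 coefM coef_sum; apply: eq_bigr => i _; rewrite coefM. Qed.

Lemma coef2M_neq0 P Q n m : coef2 (P * Q) n m != 0 ->
  exists i k, [/\ (i <= n)%N, (k <= m)%N, coef2 P i k != 0 & coef2 Q (n - i) (m - k) != 0].
Proof.
rewrite coef2M => /eqP nz; apply: boolp.contrapT => none; apply: nz.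
apply: big1 => i _; apply: big1 => k _; apply/eqP; rewrite mulf_eq0.
apply: boolp.contrapT => /negP; rewrite negb_or => /andP[hP hQ]; apply: none.
by exists i, k; split; rewrite // -ltnS.
Qed.

Definition lex_lt (x1 x2 y1 y2 : int) := x1 < y1 \/ x1 = y1 /\ x2 < y2.

Section LeadingTerm.
Variables wq wy wt : int.

Definition weight (n m : nat) : int := wq * n%:Z + wy * m%:Z.

Definition prec (n m n' m' : nat) :=
  lex_lt (weight n m) (wt * n%:Z) (weight n' m') (wt * n'%:Z).

Definition leading (P : bipoly) (pn pm : nat) (c : int) :=
  [/\ coef2 P pn pm = c, c != 0 &
      forall n m, coef2 P n m != 0 -> (n, m) <> (pn, pm) -> prec n m pn pm].

Definition below (P : bipoly) (pn pm : nat) :=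
  forall n m, coef2 P n m != 0 -> prec n m pn pm.

Lemma prec_irr n m : ~ prec n m n m.
Proof. rewrite /prec /lex_lt; lia. Qed.

Lemma prec_le_trans n m n' m' n'' m'' :
  prec n m n' m' \/ (n, m) = (n', m') -> prec n' m' n'' m'' -> prec n m n'' m''.
Proof. by case=> [|[-> ->]] //; rewrite /prec /lex_lt; lia. Qed.

Lemma prec_addr n1 m1 n2 m2 n1' m1' n2' m2' :
  prec n1 m1 n1' m1' -> prec n2 m2 n2' m2' \/ (n2, m2) = (n2', m2') ->
  prec (n1 + n2) (m1 + m2) (n1' + n2') (m1' + m2').
Proof.
move=> + [|[-> ->]]; rewrite /prec /weight /lex_lt !PoszD; lia.
Qed.

Lemma prec_addl n1 m1 n2 m2 n1' m1' n2' m2' :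
  prec n1 m1 n1' m1' \/ (n1, m1) = (n1', m1') -> prec n2 m2 n2' m2' ->
  prec (n1 + n2) (m1 + m2) (n1' + n2') (m1' + m2').
Proof. by case=> [|[-> ->]]; rewrite /prec /weight /lex_lt !PoszD; lia. Qed.

Lemma leading_weight_le P pn pm c n m :
  leading P pn pm c -> coef2 P n m != 0 -> weight n m <= weight pn pm.
Proof.
case=> _ _ top nz; have [[-> ->] //|ne] := boolp.pselect ((n, m) = (pn, pm)).
by case: (top n m nz ne) => [/ltW|[->]].
Qed.

Lemma belowD P Q pn pm : below P pn pm -> below Q pn pm -> below (P + Q) pn pm.
Proof.
move=> bP bQ n m; rewrite coef2D.
have [-> |/eqP nz _] := boolp.pselect (coef2 P n m = 0); last exact: bP.
by rewrite add0r; apply: bQ.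
Qed.

Lemma below_sum (I : Type) (r : seq I) (F : I -> bipoly) pn pm :
  (forall i, below (F i) pn pm) -> below (\sum_(i <- r) F i) pn pm.
Proof.
move=> bF; elim: r => [|x r IH]; last by rewrite big_cons; apply: belowD.
by move=> n m; rewrite big_nil /coef2 !coef0 eqxx.
Qed.

Lemma leadingD P Q pn pm c :
  leading P pn pm c -> below Q pn pm -> leading (P + Q) pn pm c.
Proof.
case=> cP c0 top bQ; split => //.
  rewrite coef2D cP; have [-> |/eqP /bQ /prec_irr //] := boolp.pselect (coef2 Q pn pm = 0).
  by rewrite addr0.
move=> n m; rewrite coef2D.
have [-> |/eqP nz _ _] := boolp.pselect (coef2 Q n m = 0); last exact: bQ.
by rewrite addr0; apply: top.
Qed.

Lemma leading_mono2 k i l : k != 0 -> leading (mono2 k i l) i l k.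
Proof.
move=> k0; split => //; first by rewrite coef2_mono2 !eqxx.
by move=> n m; rewrite coef2_mono2; case: ifP => [/andP[/eqP -> /eqP ->] _ []|]; rewrite ?eqxx.
Qed.

Lemma below_mono2 k i l pn pm : prec i l pn pm -> below (mono2 k i l) pn pm.
Proof.
by move=> lt n m; rewrite coef2_mono2; case: ifP => [/andP[/eqP -> /eqP ->]|]; rewrite ?eqxx.
Qed.

Lemma leading1 : leading 1 0 0 1.
Proof.
have -> : (1 : bipoly) = mono2 1 0 0 by rewrite /mono2 expr0 !mulr1.
exact: leading_mono2.
Qed.

Lemma leading_below P pn pm c qn qm :
  leading P pn pm c -> prec pn pm qn qm -> below P qn qm.
Proof.
case=> _ _ top lt n m nz; apply: prec_le_trans lt.
by have [eq|ne] := boolp.pselect ((n, m) = (pn, pm)); [right | left; apply: top].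
Qed.

Lemma leading_binomial k1 i1 l1 k2 i2 l2 : k1 != 0 -> prec i2 l2 i1 l1 ->
  leading (mono2 k1 i1 l1 + mono2 k2 i2 l2) i1 l1 k1.
Proof. by move=> k0 lt; apply: leadingD; [apply: leading_mono2 | apply: below_mono2]. Qed.

Lemma leading_mul_split P Q p1 q1 c1 p2 q2 c2 i k :
  leading P p1 q1 c1 -> leading Q p2 q2 c2 ->
  (i <= p1 + p2)%N -> (k <= q1 + q2)%N ->
  coef2 P i k != 0 -> coef2 Q (p1 + p2 - i) (q1 + q2 - k) != 0 -> (i, k) = (p1, q1).
Proof.
move=> [_ _ topP] [_ _ topQ] hi hk nzP nzQ.
apply: boolp.contrapT => ne.
have lt : prec (i + (p1 + p2 - i)) (k + (q1 + q2 - k)) (p1 + p2) (q1 + q2).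
  apply: prec_addr; first exact: topP.
  have [eq|ne'] := boolp.pselect ((p1 + p2 - i, q1 + q2 - k)%N = (p2, q2)).
    by right.
  by left; apply: topQ.
by move: lt; rewrite !subnKC //; apply: prec_irr.
Qed.

Lemma leadingM P Q p1 q1 c1 p2 q2 c2 :
  leading P p1 q1 c1 -> leading Q p2 q2 c2 ->
  leading (P * Q) (p1 + p2) (q1 + q2) (c1 * c2).
Proof.
move=> lP lQ; have split := leading_mul_split lP lQ.
case: lP lQ => [cP c1_0 topP] [cQ c2_0 topQ]; split; last 2 first.
- by rewrite mulf_neq0.
- move=> n m /coef2M_neq0 [i [k [hi hk nzP nzQ]]] ne.
  rewrite -(subnKC hi) -(subnKC hk).
  have [[ei ek]|neP] := boolp.pselect ((i, k) = (p1, q1)).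
    have neQ : (n - i, m - k)%N <> (p2, q2).
      by case=> e1 e2; apply: ne; rewrite -(subnKC hi) -(subnKC hk) e1 e2 ei ek.
    by apply: prec_addl; [right; rewrite ei ek | apply: topQ].
  apply: prec_addr; first exact: topP.
  have [eq|neQ] := boolp.pselect ((n - i, m - k)%N = (p2, q2)); first by right.
  by left; apply: topQ.
rewrite coef2M (bigD1 (Ordinal (leq_addr p2 p1 : (p1 < (p1 + p2).+1)%N))) //=.
rewrite (bigD1 (Ordinal (leq_addr q2 q1 : (q1 < (q1 + q2).+1)%N))) //= !addKn cP cQ.
have vanish i k : (i <= p1 + p2)%N -> (k <= q1 + q2)%N -> (i, k) <> (p1, q1) ->
    coef2 P i k * coef2 Q (p1 + p2 - i) (q1 + q2 - k) = 0.
  move=> hi hk ne; apply/eqP; rewrite mulf_eq0; apply: boolp.contrapT => /negP.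
  by rewrite negb_or => /andP[nzP nzQ]; apply: ne; apply: split.
rewrite big1 ?addr0 => [|k /= hk]; last first.
  rewrite -[X in coef2 Q X](addKn p1 p2); apply: vanish; rewrite ?leq_addr -1?ltnS //.
  by case=> ek; move: hk; rewrite -val_eqE /= ek eqxx.
rewrite big1 ?addr0 // => i /= hi; apply: big1 => k _.
apply: vanish; rewrite -1?ltnS //; case=> ei _.
by move: hi; rewrite -val_eqE /= ei eqxx.
Qed.

Lemma leadingM_eq P Q p1 q1 c1 p2 q2 c2 n m c :
  leading P p1 q1 c1 -> leading Q p2 q2 c2 ->
  (p1 + p2)%N = n -> (q1 + q2)%N = m -> c1 * c2 = c -> leading (P * Q) n m c.
Proof. by move=> lP lQ <- <- <-; apply: leadingM. Qed.

Lemma leading_prod (I : eqType) (r : seq I) (F : I -> bipoly) (pn pm : I -> nat) (c : I -> int) :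
  (forall i, i \in r -> leading (F i) (pn i) (pm i) (c i)) ->
  leading (\prod_(i <- r) F i) (\sum_(i <- r) pn i)%N (\sum_(i <- r) pm i)%N (\prod_(i <- r) c i).
Proof.
elim: r => [|x r IH] lF; first by rewrite !big_nil; apply: leading1.
rewrite !big_cons; apply: leadingM; first by apply: lF; apply: mem_head.
by apply: IH => i ri; apply: lF; rewrite in_cons ri orbT.
Qed.

Lemma leadingX P pn pm c k :
  leading P pn pm c -> leading (P ^+ k) (k * pn) (k * pm) (c ^+ k).
Proof.
move=> lP; elim: k => [|k IH]; first by rewrite !expr0 !mul0n; apply: leading1.
by rewrite !exprS !mulSn; apply: leadingM.
Qed.

End LeadingTerm.

Arguments leading_mono2 {wq wy wt k} i l.

Definition sign (b : bool) : int := if b then 1 else -1.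

(* Whether, for the slope [a / b], the leading monomial of the factor
   [(Y^(2x) + sg q^j) (1 + sg q^j Y^(2x))] of [prodser] involves [q^j];
   [tB] decides ties. *)
Definition takes_q (tB : bool) (a b x j : nat) : bool :=
  if tB then (a * j <= 2 * x * b)%N else (a * j < 2 * x * b)%N.

Section Factors.
Variables (eU tB : bool) (a b : nat) (sg : int).
Hypothesis b_gt0 : (0 < b)%N.
Hypothesis a_gt0 : (0 < a)%N || ~~ tB.
Hypothesis sg_unit : sg = 1 \/ sg = -1.

Local Notation lead := (leading (- a%:Z) (sign eU * b%:Z) (sign tB)).

Lemma sg_neq0 : sg != 0.
Proof. by case: sg_unit => ->. Qed.

Lemma prec_q_origin k : (0 < k)%N -> prec (- a%:Z) (sign eU * b%:Z) (sign tB) k 0 0 0.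
Proof. by move=> k0; rewrite /prec /weight /lex_lt /sign; move: a_gt0; case: tB => /=; lia. Qed.

Lemma leading_etaf e j N : (0 < j)%N -> lead (etaf sg e j N) 0 0 1.
Proof.
move=> j0; rewrite /etaf.
suff lead1 P : lead P 0 0 1 -> forall k, lead (P ^+ k) 0 0 1.
  case: e => m; apply: lead1.
    have -> : 1 + sg%:~R * qX ^+ j = mono2 1 0 0 + mono2 sg j 0 by rewrite /mono2; ring.
    by apply: leading_binomial => //; apply: prec_q_origin.
  rewrite big_nat_recl // expr0; apply: leadingD; first exact: leading1.
  apply: below_sum => i; have -> : - (sg%:~R * qX ^+ j) = mono2 (- sg) j 0.
    by rewrite /mono2 intrN; ring.
  apply: (leading_below (leadingX i.+1 (leading_mono2 j 0 _))).
    by rewrite oppr_eq0 sg_neq0.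
  by rewrite muln0; apply: prec_q_origin; rewrite muln_gt0 j0.
by move=> lP k; have := leadingX k lP; rewrite !muln0 expr1n.
Qed.

Lemma leading_theta0 x : (0 < x)%N ->
  lead (YX ^+ (2 * x) + sg%:~R) 0 (if eU then 2 * x else 0)%N (if eU then 1 else sg).
Proof.
move=> x0.
have -> : YX ^+ (2 * x) + sg%:~R = mono2 1 0 (2 * x) + mono2 sg 0 0 by rewrite /mono2; ring.
have sg0 := sg_neq0; case: eU.
  by apply: leading_binomial => //; rewrite /prec /weight /lex_lt /sign /=; nia.
by rewrite addrC; apply: leading_binomial => //; rewrite /prec /weight /lex_lt /sign /=; nia.
Qed.

Lemma leading_theta_factor x j : (0 < x)%N -> (0 < j)%N ->
  lead ((YX ^+ (2 * x) + sg%:~R * qX ^+ j) * (1 + sg%:~R * qX ^+ j * YX ^+ (2 * x)))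
    (if takes_q tB a b x j then j else 0)
    (if eU then (2 * x + (if takes_q tB a b x j then 2 * x else 0))%N
     else (if takes_q tB a b x j then 0 else 2 * x)%N)
    (if takes_q tB a b x j then sg else 1).
Proof.
move=> x0 j0; have sg0 := sg_neq0.
have -> : YX ^+ (2 * x) + sg%:~R * qX ^+ j = mono2 1 0 (2 * x) + mono2 sg j 0.
  by rewrite /mono2; ring.
have -> : 1 + sg%:~R * qX ^+ j * YX ^+ (2 * x) = mono2 1 0 0 + mono2 sg j (2 * x).
  by rewrite /mono2; ring.
rewrite /takes_q; move: a_gt0; case: eU; case: tB => /= ha; case: ifP => takes.
all: apply: leadingM_eq.
all: try solve [ apply: leading_binomial => //; rewrite /prec /weight /lex_lt /sign /=; nia
               | rewrite addrC; apply: leading_binomial => //;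
                 rewrite /prec /weight /lex_lt /sign /=; nia ].
all: by rewrite ?add0n ?addn0 ?mul1r ?mulr1.
Qed.

End Factors.

Definition lead_qexp tB a b (d : seq nat) N : nat :=
  (\sum_(1 <= j < N.+1) \sum_(x <- d) (if takes_q tB a b x j then j else 0))%N.

Definition active_width tB a b (d : seq nat) N : nat :=
  (\sum_(1 <= j < N.+1) \sum_(x <- d) (if takes_q tB a b x j then 2 * x else 0))%N.

Definition lead_yexp eU tB a b (d : seq nat) N : nat :=
  if eU then (\sum_(x <- d) 2 * x +
     \sum_(1 <= j < N.+1) \sum_(x <- d) (2 * x + if takes_q tB a b x j then 2 * x else 0))%N
  else (\sum_(1 <= j < N.+1) \sum_(x <- d) (if takes_q tB a b x j then 0 else 2 * x))%N.

Lemma leading_prodser eU tB a b sg e d N : (0 < b)%N -> (0 < a)%N || ~~ tB ->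
  sg = 1 \/ sg = -1 -> all (fun x => 0 < x)%N d ->
  exists c, leading (- a%:Z) (sign eU * b%:Z) (sign tB) (prodser sg e d N)
              (lead_qexp tB a b d N) (lead_yexp eU tB a b d N) c.
Proof.
move=> b0 ha sg1 /allP d_gt0.
rewrite /prodser; eexists; apply: leadingM_eq.
- by apply: leading_prod => x /d_gt0; apply: leading_theta0.
- apply: leading_prod => j; rewrite mem_index_iota => /andP[j_gt0 _]; apply: leadingM_eq.
  + by apply: leading_etaf.
  + by apply: leading_prod => x /d_gt0 x_gt0; apply: leading_theta_factor.
  + by [].
  + by [].
  + by [].
- by rewrite big1_eq add0n /lead_qexp; apply: eq_bigr => j _; rewrite add0n.
- rewrite /lead_yexp; case: eU => /=.
    by congr (_ + _)%N; apply: eq_bigr => j _; rewrite add0n.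
  by rewrite big1_eq add0n; apply: eq_bigr => j _; rewrite add0n.
- by [].
Qed.

Local Open Scope nat_scope.

Lemma leq_sum_mem (T : eqType) (s : seq T) (F : T -> nat) x :
  x \in s -> F x <= \sum_(y <- s) F y.
Proof. by move=> xs; rewrite (big_rem x xs) leq_addr. Qed.

Lemma leq_sumn_mem (s : seq nat) x : x \in s -> x <= sumn s.
Proof. by rewrite sumnE; apply: (leq_sum_mem id). Qed.

Lemma leq_sum_nat_range (g : nat -> nat) N M : N <= M ->
  \sum_(1 <= j < N.+1) g j <= \sum_(1 <= j < M.+1) g j.
Proof. by move=> NM; rewrite [X in _ <= X](big_cat_nat _ (n := N.+1)) //= leq_addr. Qed.

Lemma sum_nat_range_support (g : nat -> nat) N M :
  (forall j, 0 < j -> g j != 0 -> j <= N) -> (forall j, 0 < j -> g j != 0 -> j <= M) ->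
  \sum_(1 <= j < N.+1) g j = \sum_(1 <= j < M.+1) g j.
Proof.
suff widen N' M' : N' <= M' -> (forall j, 0 < j -> g j != 0 -> j <= N') ->
    \sum_(1 <= j < N'.+1) g j = \sum_(1 <= j < M'.+1) g j.
  by move=> gN gM; case: (leqP N M) => [NM|/ltnW MN]; [apply: widen | symmetry; apply: widen].
move=> NM gN; rewrite [RHS](big_cat_nat _ (n := N'.+1)) //=.
rewrite [X in _ + X]big1_seq ?addn0 // => j /andP[_]; rewrite mem_index_iota => /andP[Nj _].
by apply/eqP; apply: contraT => /(gN j (leq_ltn_trans (leq0n _) Nj)); rewrite leqNgt Nj.
Qed.

Section EdgeCombinatorics.
Variables (a b : nat) (d : seq nat).

Definition slack tB N := \sum_(1 <= j < N.+1) \sum_(x <- d)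
   (if takes_q tB a b x j then 2 * x * b - a * j else 0).

Lemma lead_yexp_true tB N :
  lead_yexp true tB a b d N = 2 * sumn d + N * (2 * sumn d) + active_width tB a b d N.
Proof.
rewrite /lead_yexp /active_width sumnE -big_distrr /= -addnA; congr (_ + _).
rewrite -[N in N * _](subn1 N.+1) -sum_nat_const_nat -big_split /=.
by apply: eq_bigr => j _; rewrite big_split /= big_distrr.
Qed.

Lemma lead_yexp_false tB N :
  lead_yexp false tB a b d N + active_width tB a b d N = N * (2 * sumn d).
Proof.
rewrite /lead_yexp /active_width sumnE -big_split /=.
rewrite -[N in N * _](subn1 N.+1) -sum_nat_const_nat.
apply: eq_bigr => j _; rewrite -big_split /= big_distrr /=.
by apply: eq_bigr => x _; case: (takes_q _ _ _ _ _); rewrite ?addn0 ?add0n.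
Qed.

Lemma width_slack tB N :
  b * active_width tB a b d N = a * lead_qexp tB a b d N + slack tB N.
Proof.
rewrite /active_width /lead_qexp /slack !big_distrr -big_split /=; apply: eq_bigr => j _.
rewrite !big_distrr -big_split /=; apply: eq_bigr => x _.
by rewrite /takes_q; case: tB; case: ifP; rewrite ?muln0 ?addn0 //; lia.
Qed.

(* Pairs on the edge itself contribute zero slack. *)
Lemma slack_tie N : slack true N = slack false N.
Proof.
apply: eq_bigr => j _; apply: eq_bigr => x _.
by rewrite /takes_q; case: ifP; case: ifP => //; lia.
Qed.

Hypothesis a_gt0 : 0 < a.

Definition qcut := 2 * sumn d * b.

Lemma takes_q_le_qcut tB x j : x \in d -> takes_q tB a b x j -> j <= qcut.
Proof.
move/leq_sumn_mem; rewrite /takes_q /qcut; case: tB; nia.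
Qed.

Lemma sum_takes_q_stable (h : nat -> nat -> nat) tB N :
  (forall x j, x \in d -> 0 < j -> takes_q tB a b x j -> j <= N) ->
  \sum_(1 <= j < N.+1) \sum_(x <- d) (if takes_q tB a b x j then h x j else 0) =
  \sum_(1 <= j < qcut.+1) \sum_(x <- d) (if takes_q tB a b x j then h x j else 0).
Proof.
move=> bound; apply: sum_nat_range_support => j j_gt0;
  rewrite sum_nat_seq_neq0 => /hasP[x xd]; case: ifP => //= takes _.
  exact: bound xd j_gt0 takes.
exact: takes_q_le_qcut xd takes.
Qed.

Definition edge_qexp tB := lead_qexp tB a b d qcut.
Definition edge_width tB := active_width tB a b d qcut.

Lemma leq_edge_qexp tB x j : x \in d -> 0 < j -> takes_q tB a b x j -> j <= edge_qexp tB.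
Proof.
move=> xd j_gt0 takes; rewrite /edge_qexp /lead_qexp.
have jr : j \in index_iota 1 qcut.+1.
  by rewrite mem_index_iota j_gt0 ltnS (takes_q_le_qcut xd takes).
apply: leq_trans (leq_sum_mem (fun j => \sum_(x <- d) _) jr).
by apply: leq_trans (leq_sum_mem (fun x => if takes_q tB a b x j then j else 0) xd); rewrite takes.
Qed.

Lemma lead_qexp_edge tB :
  lead_qexp tB a b d (edge_qexp tB) = edge_qexp tB /\
  active_width tB a b d (edge_qexp tB) = edge_width tB.
Proof. by split; apply: sum_takes_q_stable => x j; apply: leq_edge_qexp. Qed.

Lemma slack_le N : slack false N <= slack false qcut.
Proof.
rewrite /slack -(@sum_takes_q_stable (fun x j => 2 * x * b - a * j) false (maxn N qcut)).
  exact/leq_sum_nat_range/leq_maxl.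
by move=> x j xd _ takes; apply: leq_trans (takes_q_le_qcut xd takes) (leq_maxr _ _).
Qed.

End EdgeCombinatorics.

Local Open Scope ring_scope.

Lemma exists_seq_argmax (T : eqType) (R : realDomainType) (f : T -> R) (P : pred T) (s : seq T) :
  has P s -> exists2 x, (x \in s) && P x & forall y, y \in s -> P y -> f y <= f x.
Proof.
elim: s => // y s IH /=; have ys : y \in y :: s := mem_head y s.
have sub z : z \in s -> z \in y :: s by rewrite in_cons => ->; rewrite orbT.
case Py: (P y) => /= hasPs; last first.
  have [x /andP[xs Px] xmax] := IH hasPs; exists x; first by rewrite sub.
  by move=> z; rewrite in_cons => /orP[/eqP -> | /xmax //]; rewrite Py.
case: (boolP (has P s)) => [/IH [x /andP[xs Px] xmax]|noP].
  have [fxy|fyx] := lerP (f x) (f y).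
    exists y; rewrite ?ys ?Py // => z; rewrite in_cons => /orP[/eqP -> //| zs Pz].
    exact: le_trans (xmax z zs Pz) fxy.
  exists x; first by rewrite sub.
  move=> z; rewrite in_cons => /orP[/eqP -> _| /xmax //]; exact: ltW.
exists y; rewrite ?ys ?Py // => z; rewrite in_cons => /orP[/eqP -> //| zs Pz].
by move/hasP: noP; case; exists z.
Qed.

Definition ratio (c : nat * nat) : rat := c.1%:R / c.2%:R.

Lemma ratio_le x j x' j' : (0 < j)%N -> (0 < j')%N ->
  (ratio (x, j) <= ratio (x', j')) = (x * j' <= x' * j)%N.
Proof.
move=> j_gt0 j'_gt0; rewrite /ratio /=.
by rewrite ler_pdivrMr ?ltr0n // mulrAC ler_pdivlMr ?ltr0n // -!natrM ler_nat mulnC.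
Qed.

Lemma ratio_lt x j x' j' : (0 < j)%N -> (0 < j')%N ->
  (ratio (x, j) < ratio (x', j')) = (x * j' < x' * j)%N.
Proof.
move=> j_gt0 j'_gt0; rewrite /ratio /=.
by rewrite ltr_pdivrMr ?ltr0n // mulrAC ltr_pdivlMr ?ltr0n // -!natrM ltr_nat mulnC.
Qed.

Lemma takes_q_ratio tB x0 j0 x j : (0 < j0)%N -> (0 < j)%N ->
  takes_q tB (2 * x0) j0 x j =
  if tB then ratio (x0, j0) <= ratio (x, j) else ratio (x0, j0) < ratio (x, j).
Proof.
move=> j0_gt0 j_gt0; rewrite /takes_q -!mulnA.
by case: tB; rewrite ?leq_mul2l ?ltn_mul2l ?ratio_le ?ratio_lt // mulnC [(x * _)%N]mulnC.
Qed.

Lemma edge_qexp_mono a1 b1 a2 b2 d : (0 < a1)%N -> (0 < a2)%N ->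
  (forall x j, x \in d -> (0 < j)%N -> takes_q false a1 b1 x j -> takes_q true a2 b2 x j) ->
  (edge_qexp a1 b1 d false <= edge_qexp a2 b2 d true)%N.
Proof.
move=> a1_gt0 a2_gt0 sub; set M := maxn (qcut b1 d) (qcut b2 d).
rewrite /edge_qexp /lead_qexp.
rewrite -(@sum_takes_q_stable a1 b1 d a1_gt0 (fun x j => j) false M); last first.
  by move=> x j xd _ takes; apply: leq_trans (takes_q_le_qcut a1_gt0 xd takes) (leq_maxl _ _).
rewrite -(@sum_takes_q_stable a2 b2 d a2_gt0 (fun x j => j) true M); last first.
  by move=> x j xd _ takes; apply: leq_trans (takes_q_le_qcut a2_gt0 xd takes) (leq_maxr _ _).
rewrite big_seq [X in (_ <= X)%N]big_seq; apply: leq_sum => j.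
rewrite mem_index_iota => /andP[j_gt0 _].
rewrite big_seq [X in (_ <= X)%N]big_seq; apply: leq_sum => x xd.
by case: ifP => // takes; rewrite (sub x j xd j_gt0 takes).
Qed.

(* A slope steeper than every ratio [2 x / j] activates no factor. *)
Lemma edge_qexp_steep d : edge_qexp (2 * sumn d).+1 1 d false = 0%N.
Proof.
rewrite /edge_qexp /lead_qexp big1_seq // => j /andP[_]; rewrite mem_index_iota => /andP[j_gt0 _].
rewrite big1_seq // => x /andP[_ /leq_sumn_mem xD]; rewrite /takes_q ifF //.
by apply/negbTE; rewrite -leqNgt; nia.
Qed.

Section EdgeThrough.
Variables (d : seq nat) (n : nat).
Hypotheses (d_gt0 : all (fun x => 0 < x)%N d) (n_gt0 : (0 < n)%N).

Let cands := [seq (x, j) | x <- d, j <- iota 1 n].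

Let mem_cands x j : ((x, j) \in cands) = (x \in d) && (0 < j <= n)%N.
Proof.
apply/allpairsP/andP => [[[x' j'] [xd jr [-> ->]]]|[xd /andP[j_gt0 jn]]].
  by split=> //; move: jr; rewrite mem_iota add1n ltnS.
by exists (x, j); rewrite mem_iota add1n ltnS j_gt0 jn.
Qed.

Let reaches (c : nat * nat) := (n <= edge_qexp (2 * c.1) c.2 d true)%N.

Let reaches_last x : x \in d -> reaches (x, n).
Proof.
move=> xd; have ax : (0 < 2 * x)%N by rewrite muln_gt0 (allP d_gt0 x xd).
by apply: (leq_edge_qexp ax xd n_gt0); rewrite /takes_q leqnn.
Qed.

(* Take the largest ratio xs/js (x in d, 0 < j <= n) whose closed edge reaches
   n.  If its open edge also went beyond n, the next larger ratio would have a
   closed edge containing that open edge, contradicting maximality. *)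
Lemma exists_edge_through_pos : d != [::] ->
  exists a b, [/\ 0 < a, 0 < b & edge_qexp a b d false <= n <= edge_qexp a b d true]%N.
Proof.
move=> d_ne; have [x0 x0d] : exists x, x \in d.
  by exists (nth 0%N d 0); rewrite mem_nth // lt0n size_eq0.
have hasR : has reaches cands.
  by apply/hasP; exists (x0, n); [rewrite mem_cands x0d n_gt0 leqnn | apply: reaches_last].
have [[xs js] /andP[] ] := exists_seq_argmax ratio hasR.
rewrite mem_cands => /andP[xsd /andP[js_gt0 _]] Rs smax.
have xs_gt0 := allP d_gt0 xs xsd.
exists (2 * xs)%N, js; split; rewrite ?muln_gt0 ?xs_gt0 //; apply/andP; split; last exact: Rs.
have active_lt x j : x \in d -> (0 < j)%N -> takes_q false (2 * xs) js x j -> (j < n)%N.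
  move=> xd j_gt0; rewrite takes_q_ratio // => lt; rewrite ltnNge; apply/negP => nj.
  have := smax (x, n); rewrite mem_cands xd n_gt0 leqnn => /(_ isT (reaches_last xd)) le.
  have : ratio (x, j) <= ratio (x, n) by rewrite ratio_le // leq_mul2l nj orbT.
  by move=> ?; lra.
have cands_active x j : x \in d -> (0 < j)%N -> takes_q false (2 * xs) js x j -> (x, j) \in cands.
  by move=> xd j_gt0 takes; rewrite mem_cands xd j_gt0 ltnW // (active_lt x j xd j_gt0 takes).
pose A c := takes_q false (2 * xs) js c.1 c.2.
rewrite leqNgt; apply/negP => n_lt.
have hasA : has A cands.
  move: n_lt; rewrite /edge_qexp /lead_qexp => /(leq_ltn_trans (leq0n n)).
  rewrite lt0n sum_nat_seq_neq0 => /hasP[j]; rewrite mem_index_iota => /andP[j_gt0 _].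
  rewrite sum_nat_seq_neq0 => /hasP[x xd]; case: ifP => //= takes _.
  by apply/hasP; exists (x, j); [apply: cands_active | ].
have [[x' j'] /andP[] ] := exists_seq_argmax (fun c => - ratio c) hasA.
rewrite mem_cands => /andP[x'd /andP[j'_gt0 j'n]] A' minA.
have x'_gt0 := allP d_gt0 x' x'd.
have not_reach : ~~ reaches (x', j').
  apply/negP => R'; have := smax (x', j'); rewrite mem_cands x'd j'_gt0 j'n => /(_ isT R').
  by move: A'; rewrite /A takes_q_ratio //= => ? ?; lra.
have : (edge_qexp (2 * xs) js d false <= edge_qexp (2 * x') j' d true)%N.
  apply: edge_qexp_mono; rewrite ?muln_gt0 ?xs_gt0 ?x'_gt0 // => x j xd j_gt0 takes.
  have := minA (x, j) (cands_active x j xd j_gt0 takes) takes; rewrite lerN2 => le.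
  by rewrite takes_q_ratio.
by move: not_reach; rewrite /reaches /= -ltnNge; lia.
Qed.

End EdgeThrough.

Lemma exists_edge_through d n : all (fun x => 0 < x)%N d -> d != [::] ->
  exists a b, [/\ 0 < a, 0 < b & edge_qexp a b d false <= n <= edge_qexp a b d true]%N.
Proof.
move=> d_gt0 d_ne; have [->|n_gt0] := posnP n; last exact: exists_edge_through_pos.
by exists (2 * sumn d).+1, 1%N; rewrite edge_qexp_steep.
Qed.

Section ConvexHull.
Variable R : realType.
Implicit Types P Q : set (R * R).

Definition segment_closed Q := forall x y (l : R), Q x -> Q y -> 0 <= l -> l <= 1 ->
  Q (l * x.1 + (1 - l) * y.1, l * x.2 + (1 - l) * y.2).

Lemma subset_conv P : P `<=` Defs.conv P.
Proof.
move=> x Px; exists 1%N, (fun=> 1), (fun=> x).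
by rewrite !big_ord1 !mul1r -surjective_pairing; split.
Qed.

Lemma conv_segment_closed P : segment_closed (Defs.conv P).
Proof.
move=> _ _ l [m1 [w1 [p1 [w1_ge0 [w1_1 [Pp1 ->]]]]]] [m2 [w2 [p2 [w2_ge0 [w2_1 [Pp2 ->]]]]]] l0 l1.
have l'0 : 0 <= 1 - l by rewrite subr_ge0.
pose w i := match fintype.split i with inl j => l * w1 j | inr j => (1 - l) * w2 j end.
pose p i := match fintype.split i with inl j => p1 j | inr j => p2 j end.
have splitl (j : 'I_m1) : fintype.split (lshift m2 j) = inl j.
  exact: (unsplitK (inl j : 'I_m1 + 'I_m2)).
have splitr (j : 'I_m2) : fintype.split (rshift m1 j) = inr j.
  exact: (unsplitK (inr j : 'I_m1 + 'I_m2)).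
have sum_w (f : R * R -> R) : \sum_(i < m1 + m2) w i * f (p i) =
    l * \sum_(i < m1) w1 i * f (p1 i) + (1 - l) * \sum_(i < m2) w2 i * f (p2 i).
  rewrite big_split_ord !mulr_sumr /w /p.
  by congr (_ + _); apply: eq_bigr => i _; rewrite ?splitl ?splitr mulrA.
exists (m1 + m2)%N, w, p; split; [|split; [|split]].
- by move=> i; rewrite /w; case: (fintype.split i) => j; apply: mulr_ge0.
- move: (sum_w (fun=> 1)); rewrite !(eq_bigr _ (fun i _ => mulr1 _)) w1_1 w2_1 !mulr1.
  by rewrite addrC subrK.
- by move=> i; rewrite /p; case: (fintype.split i).
- by rewrite (sum_w fst) (sum_w snd).
Qed.

Lemma conv_min P Q : segment_closed Q -> P `<=` Q -> Defs.conv P `<=` Q.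
Proof.
move=> segQ PQ _ [m [w [p [w_ge0 [w_1 [Pp ->]]]]]].
elim: m w p w_ge0 w_1 Pp => [|m IH] w p w_ge0 w_1 Pp.
  by move: w_1; rewrite big_ord0 => /eqP; rewrite eq_sym oner_eq0.
rewrite !big_ord_recr /=.
set W := \sum_(i < m) w (widen_ord (leqnSn m) i).
have W_ge0 : 0 <= W by apply: sumr_ge0 => i _.
move: w_1; rewrite big_ord_recr /= -/W => w_1.
have w_last : w ord_max = 1 - W by rewrite -w_1 addrAC subrr add0r.
have [W0|W_neq0] := eqVneq W 0.
  have w0 (i : 'I_m) : w (widen_ord (leqnSn m) i) = 0.
    exact: (psumr_eq0P (fun i _ => w_ge0 _) W0).
  rewrite !big1 ?add0r => [| i _ | i _]; rewrite ?w0 ?mul0r //.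
  by rewrite w_last W0 subr0 !mul1r -surjective_pairing; apply: PQ.
have W_gt0 : 0 < W by rewrite lt_neqAle eq_sym W_neq0.
have rescale (f : 'I_m -> R) : W * \sum_(i < m) w (widen_ord (leqnSn m) i) / W * f i =
    \sum_(i < m) w (widen_ord (leqnSn m) i) * f i.
  by rewrite mulr_sumr; apply: eq_bigr => i _; rewrite mulrA mulrCA divff ?mulr1.
have Qinit := IH (fun i => w (widen_ord (leqnSn m) i) / W) (fun i => p (widen_ord (leqnSn m) i)).
have W_le1 : W <= 1 by rewrite -w_1 lerDl.
have := segQ _ _ W (Qinit _ _ (fun i => Pp _)) (PQ _ (Pp ord_max)) W_ge0 W_le1.
rewrite w_last /= !rescale; apply.
- by move=> i; apply: divr_ge0.
- by rewrite -mulr_suml -/W divff.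
Qed.

Lemma convA_segment_closed P : segment_closed (Defs.convA P).
Proof.
move=> _ _ l [y1 [t1 [c1 [t1_ge0 ->]]]] [y2 [t2 [c2 [t2_ge0 ->]]]] l0 l1.
exists (l * y1.1 + (1 - l) * y2.1, l * y1.2 + (1 - l) * y2.2), (l * t1 + (1 - l) * t2).
split; first exact: conv_segment_closed.
split; last by congr (_, _) => /=; ring.
by apply: addr_ge0; apply: mulr_ge0; rewrite ?subr_ge0.
Qed.

Lemma conv_convA P : Defs.conv P `<=` Defs.convA P.
Proof. by move=> [x1 x2] cx; exists (x1, x2), 0; rewrite addr0. Qed.

Lemma nuJ_subset P Q : P `<=` Defs.convA Q -> nuJ P `<=` nuJ Q.
Proof.
move=> PQ; apply: closureS => _ [y [t [cy [t_ge0 ->]]]].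
have [y' [t' [cy' [t'_ge0 ->]]]] := conv_min (@convA_segment_closed Q) PQ cy.
by exists y', (t' + t); rewrite addrA; split; rewrite ?addr_ge0.
Qed.

End ConvexHull.

Lemma coefser_slope_bound sg u d n s a b : (0 < b)%N -> sg = 1 \/ sg = -1 ->
  all (fun x => 0 < x)%N d -> coefser sg u d n s != 0 ->
  b%:Z * s - a%:Z * n%:Z <= (b * sumn d + slack a b d false n)%N%:Z /\
  - (b%:Z * s) - a%:Z * n%:Z <= (b * sumn d + slack a b d false n)%N%:Z.
Proof.
move=> b_gt0 sg1 d_gt0; rewrite /coefser /=.
set sh := (sumn d + n * (2 * sumn d))%N.
case E: (s + sh%:Z) => [m|] // nz.
set e := (size d)%:Z + u.
have [c1 L1] := leading_prodser true (tB := false) (a := a) e n b_gt0 (orbT _) sg1 d_gt0.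
have [c2 L2] := leading_prodser false (tB := false) (a := a) e n b_gt0 (orbT _) sg1 d_gt0.
have yF := lead_yexp_false a b d false n; have wS := width_slack a b d false n.
have := leading_weight_le L1 nz; have := leading_weight_le L2 nz.
rewrite lead_yexp_true.
set y := lead_yexp false false a b d n in yF *.
set w := active_width false a b d n in yF wS *.
set q := lead_qexp false a b d n in wS *.
set S := slack a b d false n in wS *.
rewrite /weight /sign /=.
have Em : b%:Z * m%:Z = b%:Z * s + b%:Z * (sumn d)%:Z + b%:Z * (n * (2 * sumn d))%N%:Z.
  by rewrite -E /sh PoszD; ring.
have yF' : b%:Z * y%:Z + (b * w)%N%:Z = b%:Z * (n * (2 * sumn d))%N%:Z.
  by rewrite -yF PoszD PoszM; ring.
have wS' : (b * w)%N%:Z = (a * q)%N%:Z + S%:Z by rewrite wS PoszD.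
rewrite !PoszD !PoszM in yF' wS' Em *.
by move=> L2' L1'; split; lia.
Qed.

Lemma coefser_edge_vertex sg u d a b eU tB : (0 < a)%N -> (0 < b)%N -> sg = 1 \/ sg = -1 ->
  all (fun x => 0 < x)%N d ->
  coefser sg u d (edge_qexp a b d tB)
    (if eU then (sumn d + edge_width a b d tB)%N%:Z else - (sumn d + edge_width a b d tB)%N%:Z)
  != 0.
Proof.
move=> a_gt0 b_gt0 sg1 d_gt0; set N := edge_qexp a b d tB.
have [qN wN] := lead_qexp_edge b d a_gt0 tB; rewrite -/N in qN wN.
have a_ok : (0 < a)%N || ~~ tB by rewrite a_gt0.
have [c [cN c0 _]] := leading_prodser eU ((size d)%:Z + u) N b_gt0 a_ok sg1 d_gt0.
rewrite qN in cN; rewrite /coefser /=.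
have -> : (if eU then (sumn d + edge_width a b d tB)%N%:Z
           else - (sumn d + edge_width a b d tB)%N%:Z) + (sumn d + N * (2 * sumn d))%N%:Z
         = (lead_yexp eU tB a b d N)%:Z.
  case: eU {cN}; first by rewrite lead_yexp_true wN !PoszD !PoszM; lia.
  have yF := lead_yexp_false a b d tB N; rewrite wN in yF.
  have : (lead_yexp false tB a b d N)%:Z = (N * (2 * sumn d))%N%:Z - (edge_width a b d tB)%:Z.
    by rewrite -yF PoszD; ring.
  by rewrite !PoszD !PoszM; lia.
by move: cN; rewrite /coef2 => ->.
Qed.

(* Four points [(nA, +-yA)] and [(nB, +-yB)] with [b (yB - yA) = a (nB - nA)]
   span a trapezoid; any [(n, s)] under its upper and lower edges lies in it. *)
Lemma conv_trapezoid (R : realType) (P : set (R * R)) (v nA nB yA yB a b n s : R) :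
  0 < b -> nA <= n -> n <= nB -> b * (yB - yA) = a * (nB - nA) ->
  b * s <= a * (n - nA) + b * yA -> - (b * s) <= a * (n - nA) + b * yA ->
  P (v + nA, yA / 2) -> P (v + nA, - yA / 2) -> P (v + nB, yB / 2) -> P (v + nB, - yB / 2) ->
  Defs.conv P (v + n, s / 2).
Proof.
move=> b_gt0 nAn nnB slope up low PA PA' PB PB'.
have comb x y l z : Defs.conv P x -> Defs.conv P y -> 0 <= l -> l <= 1 ->
    z.1 = l * x.1 + (1 - l) * y.1 -> z.2 = l * x.2 + (1 - l) * y.2 -> Defs.conv P z.
  by move=> cx cy l0 l1 e1 e2; rewrite [z]surjective_pairing e1 e2; apply: conv_segment_closed.
have b0 : b != 0 by rewrite gt_eqF.
set L := yA + a * (n - nA) / b.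
have sL : s <= L by rewrite /L -(ler_pM2l b_gt0) mulrDr mulrCA mulfV // mulr1; lra.
have sL' : - s <= L by rewrite /L -(ler_pM2l b_gt0) mulrDr mulrCA mulfV // mulr1; lra.
have [top bot] : Defs.conv P (v + n, L / 2) /\ Defs.conv P (v + n, - L / 2).
  have [eAB|neAB] := eqVneq nA nB.
    have en : n = nA by apply/eqP; rewrite eq_le nAn eAB nnB.
    have eL : L = yA by rewrite /L en subrr mulr0 mul0r addr0.
    by rewrite eL en; split; apply: subset_conv.
  have wid : 0 < nB - nA by rewrite subr_gt0 lt_neqAle neAB (le_trans nAn nnB).
  have wid0 : nB - nA != 0 by rewrite gt_eqF.
  set w := (n - nA) / (nB - nA).
  have w0 : 0 <= w by apply: divr_ge0; [rewrite subr_ge0 | exact: ltW].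
  have w1 : w <= 1 by rewrite ler_pdivrMr // mul1r lerD2r.
  have yBE : yB = yA + a * (nB - nA) / b.
    by rewrite -slope mulrC mulrA mulVf // mul1r addrC subrK.
  split.
    apply: (comb _ _ (1 - w) _ (subset_conv PA) (subset_conv PB));
      rewrite ?subr_ge0 ?lerBlDr ?lerDl //= /w; first by field.
    by rewrite /L yBE; field; rewrite b0.
  apply: (comb _ _ (1 - w) _ (subset_conv PA') (subset_conv PB'));
    rewrite ?subr_ge0 ?lerBlDr ?lerDl //= /w; first by field.
  by rewrite /L yBE; field; rewrite b0.
have [L0|L_neq0] := eqVneq L 0.
  have -> : s = 0 by apply/eqP; rewrite eq_le; apply/andP; split; lra.
  by move: top; rewrite L0 mul0r.
have L_gt0 : 0 < L by rewrite lt_neqAle eq_sym L_neq0 /=; lra.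
apply: (comb _ _ ((L + s) / (2 * L)) _ top bot).
- by apply: divr_ge0; lra.
- by rewrite ler_pdivrMr ?mul1r; lra.
- by rewrite /=; field; rewrite gt_eqF.
- by rewrite /=; field; rewrite gt_eqF.
Qed.

Lemma supp_sub_convA_nil (R : realType) u sg1 sg2 :
  sg1 = 1 \/ sg1 = -1 -> sg2 = 1 \/ sg2 = -1 ->
  supp (vexp R u [::]) (coefser sg1 u [::]) `<=` Defs.convA (supp (vexp R u [::]) (coefser sg2 u [::])).
Proof.
move=> sg1_unit sg2_unit _ [n [s [nz ->]]].
have [up low] := coefser_slope_bound 0 (b := 1) isT sg1_unit (isT : all _ [::]) nz.
have slack0 : slack 0 1 [::] false n = 0%N by rewrite /slack big1 // => j _; rewrite big_nil.
have edge0 : edge_qexp 1 1 [::] false = 0%N.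
  by rewrite /edge_qexp /lead_qexp big1 // => j _; rewrite big_nil.
have width0 : edge_width 1 1 [::] false = 0%N.
  by rewrite /edge_width /active_width big1 // => j _; rewrite big_nil.
rewrite slack0 /= in up low; have -> : s = 0 by lia.
have := @coefser_edge_vertex sg2 u [::] 1 1 true false isT isT sg2_unit isT.
rewrite edge0 width0 /= => vertex.
exists (vexp R u [::] + 0%:R, 0%:~R / 2), n%:R; split; last by rewrite ler0n addr0.
by apply: subset_conv; exists 0%N, 0.
Qed.

Lemma supp_sub_conv (R : realType) u d sg1 sg2 : all (fun x => 0 < x)%N d -> d != [::] ->
  sg1 = 1 \/ sg1 = -1 -> sg2 = 1 \/ sg2 = -1 ->
  supp (vexp R u d) (coefser sg1 u d) `<=` Defs.conv (supp (vexp R u d) (coefser sg2 u d)).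
Proof.
move=> d_gt0 d_ne sg1_unit sg2_unit _ [n [s [nz ->]]]; set v := vexp R u d.
have [a [b [a_gt0 b_gt0 /andP[nAn nnB]]]] := exists_edge_through n d_gt0 d_ne.
have [up low] := coefser_slope_bound a b_gt0 sg1_unit d_gt0 nz.
have slack_n := slack_le b d a_gt0 n.
have wA := width_slack a b d false (qcut b d).
have wB := width_slack a b d true (qcut b d); rewrite slack_tie in wB.
set nA := edge_qexp a b d false in nAn wA *.
set nB := edge_qexp a b d true in nnB wB *.
set wdA := edge_width a b d false in wA *.
set wdB := edge_width a b d true in wB *.
set S := slack a b d false (qcut b d) in wA wB slack_n.
have vertex eU tB := coefser_edge_vertex u eU tB a_gt0 b_gt0 sg2_unit d_gt0.
have V1 := vertex true false; have V2 := vertex false false.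
have V3 := vertex true true; have V4 := vertex false true.
rewrite -/nA -/nB -/wdA -/wdB /= in V1 V2 V3 V4.
pose yA : R := (sumn d + wdA)%N%:R.
pose yB : R := (sumn d + wdB)%N%:R.
have wA' : (b%:R * wdA%:R : R) = a%:R * nA%:R + S%:R by rewrite -!natrM -natrD wA.
have wB' : (b%:R * wdB%:R : R) = a%:R * nB%:R + S%:R by rewrite -!natrM -natrD wB.
have byA : (b%:R * yA : R) = b%:R * (sumn d)%:R + b%:R * wdA%:R by rewrite /yA natrD mulrDr.
have cap : (b * sumn d + slack a b d false n)%N%:~R <= (b%:R * (sumn d)%:R + S%:R : R).
  by rewrite -natrM -natrD ler_nat leq_add2l.
apply: (@conv_trapezoid R _ v nA%:R nB%:R yA yB a%:R b%:R n%:R s%:~R).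
- by rewrite ltr0n.
- by rewrite ler_nat.
- by rewrite ler_nat.
- have -> : (b%:R * (yB - yA) : R) = b%:R * wdB%:R - b%:R * wdA%:R by rewrite /yA /yB !natrD; ring.
  by rewrite wA' wB'; ring.
- move: up; rewrite -(ler_int R) intrB !intrM => up.
  by rewrite byA; move: cap; lra.
- move: low; rewrite -(ler_int R) intrB intrN !intrM => low.
  by rewrite byA; move: cap; lra.
- by exists nA, (sumn d + wdA)%N%:Z.
- by exists nA, (- (sumn d + wdA)%N%:Z); split => //; rewrite intrN mulNr.
- by exists nB, (sumn d + wdB)%N%:Z.
- by exists nB, (- (sumn d + wdB)%N%:Z); split => //; rewrite intrN mulNr.
Qed.

Theorem lemma6p3 (R : realType) (u : int) (d : seq nat)
    (hd : all (fun x => 0 < x)%N d) :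
  nuJ (supp (vexp R u d) (coef_quot u d)) = nuJ (supp (vexp R u d) (coef_phi u d)).
Proof.
have sub sg1 sg2 : sg1 = 1 \/ sg1 = -1 -> sg2 = 1 \/ sg2 = -1 ->
    nuJ (supp (vexp R u d) (coefser sg1 u d)) `<=` nuJ (supp (vexp R u d) (coefser sg2 u d)).
  move=> sg1_unit sg2_unit; apply: nuJ_subset.
  have [d0|d_ne] := eqVneq d [::]; first by rewrite d0; apply: supp_sub_convA_nil.
  by move=> p /(supp_sub_conv hd d_ne sg1_unit sg2_unit); apply: conv_convA.
by apply/seteqP; split; apply: sub; [left | right | right | left].
Qed.
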